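(* Fix an archive level $K\ge 0$ and consider the period equilibria of the two environments $e\in\{\mathrm{HO},\mathrm{AI}\}$ at $K$, with posted flows $q_L^e(K),q_H^e(K)$ satisfying $Q^e(K)=\pi q_L^e(K)+(1-\pi)q_H^e(K)>0$ and $q_L^e(K)>0$. Then the expected knowledge increment satisfies $$\bar\Delta^e(K)=\Delta\cdot\frac{(1-\pi)\,q_H^{e}(K)}{\pi\,q_L^{e}(K)+(1-\pi)\,q_H^{e}(K)},$$ which is increasing in the ratio $q_H^e(K)/q_L^e(K)$. Therefore $c^{*,\mathrm{AI}}(K)\ge c^{*,\mathrm{HO}}(K)$ if and only if $$\frac{q_H^{\mathrm{AI}}(K)}{q_L^{\mathrm{AI}}(K)}\ge \frac{q_H^{\mathrm{HO}}(K)}{q_L^{\mathrm{HO}}(K)}.$$ Moreover, holding escalation probabilities fixed across environments ($m_\theta^{\mathrm{AI}}(K)=m_\theta^{\mathrm{HO}}(K)$ for both $\theta\in\{L,H\}$), a sufficient condition for the posted pool to be more $H$-rich under AI (i.e. for the displayed ratio inequality to hold) is $$\frac{1-a_H^{\mathrm{AI}}(K)}{1-a_H^{\mathrm{HO}}(K)}>\frac{1-a_L^{\mathrm{AI}}(K)}{1-a_L^{\mathrm{HO}}(K)}.$$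
   Context: Model: routine-task share $\pi\in(0,1)$; query types $\theta\in\{L,H\}$ (routine and knowledge-enhancing); environments $e\in\{\mathrm{HO},\mathrm{AI}\}$ (human-only and AI). Parameters $\Delta>0$ (knowledge increment from a resolved type-$H$ query), $\beta\ge 0$, $u\ge 0$. For each $e$ and $K$: private-resolution probabilities $a_\theta^e(K)\in[0,1)$; a posting-cost CDF $\Gamma_\theta$ on $[0,\infty)$; private values $V_\theta>0$; an answering-cost CDF $F$ on $[0,\bar c]$; a cost shifter $C(K)$. In a period equilibrium at $(K,e)$ the following hold: match probability $\mu^e=\min\{1,\Psi(\alpha^{*,e})/Q^e\}$ where $\Psi(\alpha^{*,e})$ is the mass of participating contributors; expected increment $\bar\Delta^e=(1-\pi)q_H^e\Delta/Q^e$; answering cutoff $c^{*,e}(K)=\max\{0,\beta\bar\Delta^e(K)+u-C(K)\}$; resolution probability $\sigma^e=\mu^eF(c^{*,e})$; escalation probabilities $m_\theta^e=\Gamma_\theta(\sigma^eV_\theta)$; posted flows $q_\theta^e(K)=m_\theta^e(K)[1-a_\theta^e(K)]$ and total flow $Q^e=\pi q_L^e+(1-\pi)q_H^e$. *)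

From Stdlib Require Import Reals Lra.
Open Scope R_scope.

Inductive env := HO | AI.
Inductive qtype := L | H.

Definition cdf_on_nonneg (G : R -> R) : Prop :=
  (forall x y, x <= y -> G x <= G y) /\
  (forall x, 0 <= G x <= 1) /\
  (forall x, x < 0 -> G x = 0).

Definition cdf_on_interval (cbar : R) (G : R -> R) : Prop :=
  cdf_on_nonneg G /\ (forall x, cbar <= x -> G x = 1).

Definition total_flow (pi : R) (q : qtype -> R) : R :=
  pi * q L + (1 - pi) * q H.

Definition dbar_of_ratio (pi Delta r : R) : R :=
  Delta * ((1 - pi) * r) / (pi + (1 - pi) * r).

(* Primitives at (K,e): a (private-resolution probs), Gam (posting-cost CDFs),
   V (private values), F (answering-cost CDF), CK = C(K), Psi = Psi(alpha^{*,e})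
   (mass of participating contributors). *)
Definition period_equilibrium (pi Delta beta u : R)
    (a : qtype -> R) (Gam : qtype -> R -> R) (V : qtype -> R) (F : R -> R)
    (CK Psi : R)
    (mu Dbar cstar sigma : R) (m q : qtype -> R) : Prop :=
  let Q := total_flow pi q in
  mu = Rmin 1 (Psi / Q) /\
  Dbar = (1 - pi) * q H * Delta / Q /\
  cstar = Rmax 0 (beta * Dbar + u - CK) /\
  sigma = mu * F cstar /\
  (forall th, m th = Gam th (sigma * V th)) /\
  (forall th, q th = m th * (1 - a th)).

From Stdlib Require Import Reals Lra Psatz.
Open Scope R_scope.

(* With r = q_H / q_L the expected increment is the Moebius map
   r |-> Delta (1 - pi) r / (pi + (1 - pi) r), strictly increasing on r >= 0.
   The cutoff max (0, beta Dbar + u - C) is nondecreasing in Dbar, and strictly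
   increasing where it is positive when beta > 0; this gives both directions of
   the cutoff comparison.  When the escalation probabilities agree across
   environments, q_H / q_L = (m_H / m_L) (1 - a_H) / (1 - a_L), so comparing the
   posted pools reduces to comparing the survival factors 1 - a_theta. *)

Lemma Rdiv_le_cross_iff a b c d :
  0 < b -> 0 < d -> a / b <= c / d <-> a * d <= c * b.
Proof.
  intros hb hd.
  assert (hbd : 0 < b * d) by nra.
  replace (a * d) with (a / b * (b * d)) by (field; lra).
  replace (c * b) with (c / d * (b * d)) by (field; lra).
  split; intro h.
  - apply Rmult_le_compat_r; lra.
  - apply Rmult_le_reg_r with (b * d); assumption.
Qed.

Lemma Rdiv_lt_cross a b c d :
  0 < b -> 0 < d -> a * d < c * b -> a / b < c / d.
Proof.
  intros hb hd h.
  apply Rmult_lt_reg_r with (b * d); [nra|].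
  replace (a / b * (b * d)) with (a * d) by (field; lra).
  replace (c / d * (b * d)) with (c * b) by (field; lra).
  exact h.
Qed.

Lemma Rmax0_le_reg x y : 0 < Rmax 0 y -> Rmax 0 y <= Rmax 0 x -> y <= x.
Proof.
  unfold Rmax.
  destruct (Rle_dec 0 y), (Rle_dec 0 x); lra.
Qed.

Lemma dbar_of_ratio_div pi Delta qL qH :
  0 < qL -> pi * qL + (1 - pi) * qH <> 0 ->
  dbar_of_ratio pi Delta (qH / qL) =
  Delta * ((1 - pi) * qH) / (pi * qL + (1 - pi) * qH).
Proof.
  intros hqL hQ. unfold dbar_of_ratio.
  replace (pi + (1 - pi) * (qH / qL)) with ((pi * qL + (1 - pi) * qH) / qL)
    by (field; lra).
  field; split; lra.
Qed.

Lemma dbar_of_ratio_lt pi Delta r1 r2 :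
  0 < pi < 1 -> 0 < Delta -> 0 <= r1 -> r1 < r2 ->
  dbar_of_ratio pi Delta r1 < dbar_of_ratio pi Delta r2.
Proof.
  intros hpi hDelta hr1 hr12. unfold dbar_of_ratio.
  apply Rdiv_lt_cross; [nra | nra |].
  assert (hgap : 0 < Delta * (1 - pi) * pi * (r2 - r1)).
  { repeat apply Rmult_lt_0_compat; lra. }
  nra.
Qed.

Lemma dbar_of_ratio_le_iff pi Delta r1 r2 :
  0 < pi < 1 -> 0 < Delta -> 0 <= r1 -> 0 <= r2 ->
  dbar_of_ratio pi Delta r1 <= dbar_of_ratio pi Delta r2 <-> r1 <= r2.
Proof.
  intros hpi hDelta hr1 hr2. split; intro h.
  - destruct (Rle_or_lt r1 r2) as [hle | hlt]; [exact hle |].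
    pose proof (dbar_of_ratio_lt pi Delta r2 r1 hpi hDelta hr2 hlt). lra.
  - destruct (Rle_lt_or_eq_dec r1 r2 h) as [hlt | ->]; [| lra].
    left. apply dbar_of_ratio_lt; assumption.
Qed.

Lemma scaled_ratio_le mH mL xH xL yH yL :
  0 <= mH -> 0 < mL -> 0 < xL -> 0 < yH -> 0 < yL ->
  xL / yL <= xH / yH ->
  mH * yH / (mL * yL) <= mH * xH / (mL * xL).
Proof.
  intros hmH hmL hxL hyH hyL h.
  apply (Rdiv_le_cross_iff _ _ _ _ hyL hyH) in h.
  apply Rdiv_le_cross_iff; [nra | nra |].
  assert (hm : 0 <= mH * mL) by nra.
  replace (mH * yH * (mL * xL)) with (mH * mL * (xL * yH)) by ring.
  replace (mH * xH * (mL * yL)) with (mH * mL * (xH * yL)) by ring.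
  apply Rmult_le_compat_l; assumption.
Qed.

Section PeriodEquilibrium.

Context {pi Delta beta u CK Psi mu Dbar cstar sigma : R}.
Context {a V m q : qtype -> R} {Gam : qtype -> R -> R} {F : R -> R}.
Hypothesis heq : period_equilibrium pi Delta beta u a Gam V F CK Psi
                   mu Dbar cstar sigma m q.

Lemma equilibrium_Dbar_closed_form :
  0 < total_flow pi q ->
  Dbar = Delta * ((1 - pi) * q H) / (pi * q L + (1 - pi) * q H).
Proof.
  intro hQ. destruct heq as (_ & hDbar & _).
  unfold total_flow in *. rewrite hDbar. field. lra.
Qed.

Lemma equilibrium_Dbar_ratio :
  0 < total_flow pi q -> 0 < q L ->
  Dbar = dbar_of_ratio pi Delta (q H / q L).
Proof.
  intros hQ hqL.
  rewrite equilibrium_Dbar_closed_form, dbar_of_ratio_div by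
    (assumption || (unfold total_flow in hQ; lra)).
  reflexivity.
Qed.

Lemma equilibrium_escalation_nonneg :
  (forall th, cdf_on_nonneg (Gam th)) -> forall th, 0 <= m th.
Proof.
  intros hGam th. destruct heq as (_ & _ & _ & _ & hm & _).
  rewrite hm. destruct (hGam th) as (_ & hbound & _). apply hbound.
Qed.

Lemma equilibrium_flow_nonneg :
  (forall th, cdf_on_nonneg (Gam th)) -> (forall th, a th <= 1) ->
  forall th, 0 <= q th.
Proof.
  intros hGam ha th. destruct heq as (_ & _ & _ & _ & _ & hq).
  rewrite hq. apply Rmult_le_pos.
  - apply equilibrium_escalation_nonneg; assumption.
  - specialize (ha th). lra.
Qed.

End PeriodEquilibrium.

Theorem lemma1
  (pi Delta beta u : R)
  (hpi : 0 < pi < 1) (hDelta : 0 < Delta) (hbeta : 0 <= beta) (hu : 0 <= u)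
  (a : env -> qtype -> R -> R)
  (Gam : env -> qtype -> R -> R) (V : env -> qtype -> R)
  (F : env -> R -> R) (cbar : env -> R) (C : R -> R) (Psi : env -> R)
  (ha : forall e th K, 0 <= a e th K < 1)
  (hGam : forall e th, cdf_on_nonneg (Gam e th))
  (hV : forall e th, 0 < V e th)
  (hcbar : forall e, 0 <= cbar e)
  (hF : forall e, cdf_on_interval (cbar e) (F e))
  (hPsi : forall e, 0 <= Psi e)
  (K : R) (hK : 0 <= K)
  (mu Dbar cstar sigma : env -> R) (m q : env -> qtype -> R)
  (heq : forall e, period_equilibrium pi Delta beta u
                     (fun th => a e th K) (Gam e) (V e) (F e) (C K) (Psi e)
                     (mu e) (Dbar e) (cstar e) (sigma e) (m e) (q e))
  (hQ : forall e, 0 < total_flow pi (q e))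
  (hqL : forall e, 0 < q e L) :
  (* closed form of the expected increment *)
  (forall e, Dbar e = Delta * ((1 - pi) * q e H) / (pi * q e L + (1 - pi) * q e H))
  (* it is a function of the ratio q_H/q_L ... *)
  /\ (forall e, Dbar e = dbar_of_ratio pi Delta (q e H / q e L))
  (* ... which is (strictly) increasing in that ratio *)
  /\ (forall r1 r2, 0 <= r1 -> r1 < r2 -> dbar_of_ratio pi Delta r1 < dbar_of_ratio pi Delta r2)
  (* ratio comparison implies cutoff comparison *)
  /\ (q AI H / q AI L >= q HO H / q HO L -> cstar AI >= cstar HO)
  (* converse, in the non-degenerate case beta > 0 and interior HO cutoff *)
  /\ (0 < beta -> 0 < cstar HO ->
        cstar AI >= cstar HO -> q AI H / q AI L >= q HO H / q HO L)
  (* sufficient condition with escalation probabilities held fixed *)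
  /\ ((forall th, m AI th = m HO th) ->
        (1 - a AI H K) / (1 - a HO H K) > (1 - a AI L K) / (1 - a HO L K) ->
        q AI H / q AI L >= q HO H / q HO L).
Proof.
  pose proof (fun e => equilibrium_Dbar_ratio (heq e) (hQ e) (hqL e)) as HDbar.
  assert (hratio : forall e, 0 <= q e H / q e L).
  { intro e. apply Rmult_le_pos; [| left; apply Rinv_0_lt_compat, hqL].
    apply (equilibrium_flow_nonneg (heq e) (hGam e)).
    intro th. pose proof (ha e th K). lra. }
  assert (hcstar : forall e, cstar e = Rmax 0 (beta * Dbar e + u - C K))
    by (intro e; apply (heq e)).
  assert (hmono : q HO H / q HO L <= q AI H / q AI L <-> Dbar HO <= Dbar AI)
    by (rewrite !HDbar; symmetry; apply dbar_of_ratio_le_iff; auto).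
  split; [intro e; apply (equilibrium_Dbar_closed_form (heq e) (hQ e)) |].
  split; [exact HDbar |].
  split; [intros; apply dbar_of_ratio_lt; assumption |].
  split.
  { intro hle. apply Rge_le in hle. apply hmono in hle.
    rewrite !hcstar. apply Rle_ge, Rle_max_compat_l.
    pose proof (Rmult_le_compat_l beta _ _ hbeta hle). lra. }
  split.
  { intros hbeta_pos hpos hge. apply Rle_ge, hmono.
    rewrite !hcstar in *. apply Rge_le, (Rmax0_le_reg _ _ hpos) in hge.
    apply Rmult_le_reg_l with beta; lra. }
  intros hm hsurv.
  assert (hq : forall e th, q e th = m e th * (1 - a e th K))
    by (intros e th; apply (heq e)).
  rewrite !hq, !hm. apply Rle_ge.
  pose proof (hqL HO) as hqL_HO. rewrite hq in hqL_HO.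
  pose proof (ha AI L K) as haAIL. pose proof (ha HO H K) as haHOH.
  pose proof (ha HO L K) as haHOL.
  apply scaled_ratio_le; [| nra | lra | lra | lra | lra].
  exact (equilibrium_escalation_nonneg (heq HO) (hGam HO) H).
Qed.
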